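(* Let $n>s+1$, let $(p_{ij})_{i\neq j}$ be a probability distribution on $\mathcal{P}_n$ with $p_{ij}=p_{ji}>0$ for all $i\neq j$, let $Y_0\in(\mathbb{R}^s)^n$ be arbitrary, and let $Y(t)$ be the solution of the gradient flow of relative entropy with $Y(0)=Y_0$. (i) If $\beta(x)=(1+x)^{-1}$, then there is a uniform constant $C$ such that $\operatorname{diam} Y(t)\le C\,t^{1/4}$ for all $t\ge 1$. (ii) If $\beta(x)=e^{-x}$, then there is a uniform constant $C$ such that $\operatorname{diam} Y(t)\le C$ for all $t\ge 0$.
   Context: Standing setup. Fix integers $s\ge 1$ and $n>s+1$. Let $\mathcal{P}_n=\{(i,j): i,j\in\{1,\dots,n\},\ i\neq j\}$. Let $(p_{ij})_{i\neq j}$ be a probability distribution on $\mathcal{P}_n$ (so $\sum_{i\neq j}p_{ij}=1$) with $p_{ij}=p_{ji}>0$ for all $i\neq j$. Let $\beta:[0,\infty)\to(0,\infty)$ be a smooth decreasing function with $\sup_{x\ge 0}|(\log\beta)'(x)|<\infty$. For points $Y=(y_1,\dots,y_n)$ with $y_i\in\mathbb{R}^s$ define $q_{ij}=\beta(|y_i-y_j|^2)/\sum_{k\neq \ell}\beta(|y_k-y_\ell|^2)$ for $i\neq j$, and the relative entropy $\mathcal{C}(Y)=\sum_{i\neq j}p_{ij}\log(p_{ij}/q_{ij})$. The gradient flow of $\mathcal{C}$ is the ODE system $$\frac{dy_i}{dt}=4\sum_{j\neq i}(p_{ij}-q_{ij})(y_i-y_j)(\log\beta)'(|y_i-y_j|^2),\qquad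 i=1,\dots,n,$$ which, for any initial data $Y_0=Y(0)\in(\mathbb{R}^s)^n$, has a solution $Y(t)=(y_1(t),\dots,y_n(t))$ for all $t\ge0$. $\operatorname{diam}Y=\max_{i,j}|y_i-y_j|$. A constant is ''uniform'' if it is independent of $t$ (it may depend on $n,s,Y_0,(p_{ij}),\beta$). *)

From HB Require Import structures.
From mathcomp Require Import all_boot all_order all_algebra.
From mathcomp Require Import all_classical all_reals all_analysis.
Set Implicit Arguments. Unset Strict Implicit. Unset Printing Implicit Defensive.
Import Order.TTheory GRing.Theory Num.Theory.
Import numFieldNormedType.Exports.
Local Open Scope ring_scope.
Local Open Scope classical_set_scope.

Section Defs.
Variable R : realType.

(* A configuration Y = (y_1,...,y_n), y_i in R^s, as a function 'I_n -> 'I_s -> R. *)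

Definition dist2 (n s : nat) (Y : 'I_n -> 'I_s -> R) (i j : 'I_n) : R :=
  \sum_(k < s) (Y i k - Y j k) ^+ 2.

Definition diam (n s : nat) (Y : 'I_n -> 'I_s -> R) : R :=
  \big[Num.max/0]_(i < n) \big[Num.max/0]_(j < n) Num.sqrt (dist2 Y i j).

Definition qq (beta : R -> R) (n s : nat) (Y : 'I_n -> 'I_s -> R) (i j : 'I_n) : R :=
  beta (dist2 Y i j) /
  (\sum_(k < n) \sum_(l < n | l != k) beta (dist2 Y k l)).

(* (p_ij)_{i<>j}: symmetric, positive probability distribution on P_n
   (diagonal values p i i are irrelevant and unused). *)
Definition prob_on_pairs (n : nat) (p : 'I_n -> 'I_n -> R) : Prop :=
  (forall i j : 'I_n, i != j -> 0 < p i j) /\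
  (forall i j : 'I_n, i != j -> p i j = p j i) /\
  (\sum_(i < n) \sum_(j < n | j != i) p i j = 1).

Definition flow_rhs (beta : R -> R) (n s : nat) (p : 'I_n -> 'I_n -> R)
  (Y : 'I_n -> 'I_s -> R) (i : 'I_n) (k : 'I_s) : R :=
  4 * \sum_(j < n | j != i)
        (p i j - qq beta Y i j) * (Y i k - Y j k) *
        derive1 (fun x => ln (beta x)) (dist2 Y i j).

Definition is_flow_solution (beta : R -> R) (n s : nat) (p : 'I_n -> 'I_n -> R)
  (Y0 : 'I_n -> 'I_s -> R) (Y : R -> 'I_n -> 'I_s -> R) : Prop :=
  (forall i k, Y 0 i k = Y0 i k) /\
  (forall i k, (fun t : R => Y t i k) @ (0:R)^'+ --> Y0 i k) /\
  (forall t : R, 0 < t -> forall i k,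
     is_derive t 1 (fun u => Y u i k) (flow_rhs beta p (Y t) i k)).

Definition beta_t (x : R) : R := (1 + x)^-1.
Definition beta_g (x : R) : R := expR (- x).

End Defs.

(* The cross entropy [- \sum p_ij log q_ij] differs from the relative entropy by
   a constant and decreases along the flow.  All its terms
   [log Z - log beta(|y_i - y_j|^2)] are nonnegative, so each one stays below a
   uniform multiple of [1 / p_ij]: at all times the values
   [beta(|y_a - y_b|^2)] and [beta(|y_k - y_l|^2)] have uniformly bounded ratio.

   For [beta = exp(- x)] this says that all squared distances differ by a
   bounded amount.  Now [n >= s + 2] points of [R^s] cannot be almost
   equidistant at a large scale [m]: [s + 1] difference vectors from a base
   point are linearly dependent, while their Gram matrix is close to
   [m/2 (I + J)], whose smallest eigenvalue is [m/2].

   For [beta = (1 + x)^-1] the sum [V] of all squared distances satisfies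
   [V' = 8 n \sum w_ij |y_i - y_j|^2] for the flow weights [w], and the
   comparability of the [1 + |y_i - y_j|^2] gives [V V' <= const].  Hence [V^2]
   grows at most linearly, and [diam^4 <= V^2]. *)

From HB Require Import structures.
From mathcomp Require Import all_boot all_order all_algebra.
From mathcomp Require Import all_classical all_reals all_analysis.
From mathcomp Require Import ring lra zify.
Import Order.TTheory GRing.Theory Num.Theory.
Import numFieldNormedType.Exports.
Local Open Scope ring_scope.
Local Open Scope classical_set_scope.

Set Implicit Arguments.
Unset Strict Implicit.

Section SquaredDistances.
Variables (R : realType) (n s : nat).
Implicit Types (Y : 'I_n -> 'I_s -> R) (i j : 'I_n).

Definition sqdist_sum Y : R := \sum_i \sum_j dist2 Y i j.

Lemma dist2_ge0 Y i j : 0 <= dist2 Y i j.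
Proof. by apply: sumr_ge0 => k _; exact: sqr_ge0. Qed.

Lemma dist2C Y i j : dist2 Y i j = dist2 Y j i.
Proof. by apply: eq_bigr => k _; rewrite -sqrrN opprB. Qed.

Lemma dist2xx Y i : dist2 Y i i = 0.
Proof. by apply: big1 => k _; rewrite subrr expr0n. Qed.

Lemma sqdist_sum_ge0 Y : 0 <= sqdist_sum Y.
Proof. by apply: sumr_ge0 => i _; apply: sumr_ge0 => j _; exact: dist2_ge0. Qed.

Lemma dist2_le_sqdist_sum Y i j : dist2 Y i j <= sqdist_sum Y.
Proof.
rewrite /sqdist_sum (bigD1 i) //= (bigD1 j) //= -addrA lerDl.
apply: addr_ge0; first by apply: sumr_ge0 => k _; exact: dist2_ge0.
by apply: sumr_ge0 => a _; apply: sumr_ge0 => b _; exact: dist2_ge0.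
Qed.

Lemma diam_ge0 Y : 0 <= diam Y.
Proof.
rewrite /diam; elim/big_ind: _ => [//|x y hx _|i _]; first by rewrite le_max hx.
elim/big_ind: _ => [//|x y hx _|j _]; first by rewrite le_max hx.
exact: sqrtr_ge0.
Qed.

Lemma diam_le_sqrt Y (B : R) : 0 <= B ->
  (forall i j, dist2 Y i j <= B) -> diam Y <= Num.sqrt B.
Proof.
move=> B0 hB; rewrite /diam; elim/big_ind: _ => [|x y hx hy|i _]; first exact: sqrtr_ge0.
  by rewrite ge_max hx hy.
elim/big_ind: _ => [|x y hx hy|j _]; first exact: sqrtr_ge0.
  by rewrite ge_max hx hy.
exact: ler_wsqrtr.
Qed.

Lemma diam_exp4_le Y : diam Y ^+ 4 <= sqdist_sum Y ^+ 2.
Proof.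
have V0 := sqdist_sum_ge0 Y.
have -> : sqdist_sum Y ^+ 2 = Num.sqrt (sqdist_sum Y) ^+ 4.
  by rewrite (exprM _ 2 2) sqr_sqrtr.
rewrite ler_pXn2r ?nnegrE ?diam_ge0 ?sqrtr_ge0 //.
exact: diam_le_sqrt V0 (dist2_le_sqdist_sum Y).
Qed.

End SquaredDistances.

Section AlmostEquidistant.
Variable R : realType.

Lemma rV_kernel_nonzero (N s : nat) (A : 'M[R]_(N, s)) : (s < N)%N ->
  exists2 x : 'rV[R]_N, x != 0 & x *m A = 0.
Proof.
move=> sN; have hK : kermx A != 0.
  by rewrite -mxrank_eq0 mxrank_ker; have := rank_leq_col A; lia.
have [i hi] : exists i, row i (kermx A) != 0.
  apply/existsP; rewrite -negb_forall; apply: contra hK => /forallP h.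
  by apply/eqP/row_matrixP => i; rewrite row0; apply/eqP/h.
by exists (row i (kermx A)); rewrite // -row_mul mulmx_ker row0.
Qed.

Lemma quad_form_gram (N s : nat) (x : 'I_N -> R) (v : 'I_N -> 'I_s -> R) :
  \sum_i \sum_j x i * x j * (\sum_k v i k * v j k) =
  \sum_k (\sum_i x i * v i k) ^+ 2.
Proof.
symmetry; under eq_bigr => k _ do rewrite expr2 mulr_suml.
rewrite exchange_big; apply: eq_bigr => i _ /=.
under eq_bigr => k _ do rewrite mulr_sumr.
rewrite exchange_big; apply: eq_bigr => j _ /=.
by rewrite mulr_sumr; apply: eq_bigr => k _; ring.
Qed.

Lemma quad_form_perturb (N : nat) (x : 'I_N -> R) (G T : 'I_N -> 'I_N -> R)
    (c : R) : (forall i j, `|G i j - T i j| <= c) ->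
  \sum_i \sum_j x i * x j * T i j - c * N%:R * \sum_i x i ^+ 2 <=
  \sum_i \sum_j x i * x j * G i j.
Proof.
move=> hGT.
have -> : c * N%:R * \sum_i x i ^+ 2 =
    \sum_i \sum_(j < N) c * (x i ^+ 2 + x j ^+ 2) / 2.
  transitivity (\sum_i \sum_(j < N) c / 2 * x i ^+ 2 +
                \sum_j \sum_(i < N) c / 2 * x j ^+ 2); last first.
    rewrite [X in _ + X]exchange_big -big_split; apply: eq_bigr => i _.
    by rewrite -big_split; apply: eq_bigr => j _ /=; ring.
  rewrite -big_split /= mulr_sumr; apply: eq_bigr => i _.
  by rewrite !sumr_const card_ord -mulrnDr -mulr_natr; field.
rewrite -sumrB; apply: ler_sum => i _; rewrite -sumrB; apply: ler_sum => j _.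
have c0 : 0 <= c := le_trans (normr_ge0 _) (hGT i j).
have amgm : `|x i| * `|x j| <= (x i ^+ 2 + x j ^+ 2) / 2.
  rewrite -[x i ^+ 2]real_normK ?num_real // -[x j ^+ 2]real_normK ?num_real //.
  have := sqr_ge0 (`|x i| - `|x j|); lra.
have : `|x i * x j * (G i j - T i j)| <= c * (x i ^+ 2 + x j ^+ 2) / 2.
  rewrite normrM; apply: le_trans (ler_wpM2l (normr_ge0 _) (hGT i j)) _.
  by rewrite normrM mulrC -mulrA ler_wpM2l.
rewrite ler_norml => /andP[+ _]; lra.
Qed.

Lemma quad_form_equilateral (N : nat) (x : 'I_N -> R) (m : R) :
  \sum_i \sum_j x i * x j * (m / 2 * (1 + (i == j)%:R)) =
  m / 2 * (\sum_i x i) ^+ 2 + m / 2 * \sum_i x i ^+ 2.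
Proof.
rewrite expr2 mulr_suml !mulr_sumr -big_split /=; apply: eq_bigr => i _.
rewrite mulr_sumr mulr_sumr [in RHS](bigD1 i) //= (bigD1 i) //= eqxx mulr1n.
under eq_bigr => j /negbTE ji do rewrite eq_sym ji addr0 mulr1.
under [in RHS]eq_bigr => j _ do rewrite mulrC.
ring.
Qed.

Lemma le_of_isotropic_near_equilateral (N : nat) (x : 'I_N -> R)
    (G : 'I_N -> 'I_N -> R) (m c : R) : 0 <= m -> (exists i, x i != 0) ->
  (forall i j, `|G i j - m / 2 * (1 + (i == j)%:R)| <= c) ->
  \sum_i \sum_j x i * x j * G i j = 0 -> m <= 2 * c * N%:R.
Proof.
move=> m0 [i xi] GT Gx.
have S2pos : 0 < \sum_i x i ^+ 2.
  rewrite (bigD1 i) //=; apply: ltr_pwDl; first by rewrite lt_def sqrf_eq0 xi sqr_ge0.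
  by apply: sumr_ge0 => j _; exact: sqr_ge0.
have := quad_form_perturb x GT; rewrite quad_form_equilateral Gx => h.
have : (m / 2 - c * N%:R) * \sum_i x i ^+ 2 <= 0.
  have q0 : 0 <= m / 2 * (\sum_i x i) ^+ 2 by apply: mulr_ge0; [lra|exact: sqr_ge0].
  apply: le_trans h; rewrite -subr_ge0.
  by rewrite [X in 0 <= X](_ : _ = m / 2 * (\sum_i x i) ^+ 2) //; ring.
by rewrite pmulr_lle0 //; lra.
Qed.

Lemma dist2_le_of_almost_equidistant (n s : nat) (z : 'I_n -> 'I_s -> R)
    (M : R) : (s.+1 < n)%N -> 0 <= M ->
  (forall a b k l, a != b -> k != l -> dist2 z a b <= dist2 z k l + M) ->
  forall a b, dist2 z a b <= 4 * M * s.+1%:R + M.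
Proof.
move=> sn M0 hM.
have n0 : (0 < n)%N by lia.
pose o : 'I_n := Ordinal n0.
have eP (i : 'I_s.+1) : (i.+1 < n)%N by have := ltn_ord i; lia.
pose e (i : 'I_s.+1) : 'I_n := Ordinal (eP i).
have eo i : e i != o by [].
have einj i j : i != j -> e i != e j by [].
pose m := dist2 z o (e ord0).
have near_m a b : a != b -> dist2 z a b <= m + M /\ m <= dist2 z a b + M.
  have oe : o != e ord0 by [].
  by move=> ab; split; [apply: hM | apply: hM].
pose v i k := z (e i) k - z o k.
pose G i j := \sum_k v i k * v j k.
have GT i j : `|G i j - m / 2 * (1 + (i == j)%:R)| <= 2 * M.
  have Gii l : G l l = dist2 z (e l) o by apply: eq_bigr => k _; rewrite expr2.
  have [hi1 hi2] := near_m _ _ (eo i); have [hj1 hj2] := near_m _ _ (eo j).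
  rewrite -Gii in hi1 hi2; rewrite -Gii in hj1 hj2.
  rewrite ler_norml; apply/andP.
  have [<-|ij] := eqVneq i j; first by rewrite mulr1n; split; lra.
  have [hij1 hij2] := near_m _ _ (einj _ _ ij).
  have polar : 2 * G i j = G i i + G j j - dist2 z (e i) (e j).
    rewrite /G /dist2 mulr_sumr -big_split -sumrB /=; apply: eq_bigr => k _.
    by rewrite /v; ring.
  rewrite addr0 mulr1; split; lra.
pose A := \matrix_(i < s.+1, k < s) v i k.
have [x x0 xA] := rV_kernel_nonzero A (ltnSn s).
have x_neq0 : exists i, x 0 i != 0.
  apply/existsP; rewrite -negb_forall; apply: contra x0 => /forallP h.
  by apply/eqP/rowP => i; rewrite mxE; apply/eqP/h.
have Gx : \sum_i \sum_j x 0 i * x 0 j * G i j = 0.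
  rewrite quad_form_gram big1 // => k _.
  have : (x *m A) 0 k = 0 by rewrite xA mxE.
  rewrite mxE (eq_bigr (fun i => x 0 i * v i k)) => [->|i _]; last by rewrite mxE.
  exact: expr0n.
have := le_of_isotropic_near_equilateral (dist2_ge0 _ _ _) x_neq0 GT Gx.
rewrite -/m mulrA => m_le a b; have [->|ab] := eqVneq a b.
  by rewrite dist2xx; apply: addr_ge0 => //; apply: mulr_ge0; [lra|].
by have [h1 _] := near_m _ _ ab; lra.
Qed.

End AlmostEquidistant.

Section Calculus.
Variable R : realType.
Implicit Types (f : R -> R) (x : R).

Lemma is_derive_sum_pred (I : eqType) (r : seq I) (P : pred I)
    (h : I -> R -> R) (dh : I -> R) x :
  (forall i, P i -> is_derive x 1 (h i) (dh i)) ->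
  is_derive x 1 (fun u => \sum_(i <- r | P i) h i u) (\sum_(i <- r | P i) dh i).
Proof.
move=> hd; elim: r => [|a r IH].
  under [fun u => _]funext => u do rewrite big_nil.
  by rewrite big_nil; exact: is_derive_cst.
under [fun u => _]funext => u do rewrite big_cons.
rewrite big_cons; case: (boolP (P a)) => Pa //.
exact: is_deriveD (hd a Pa) IH.
Qed.

Lemma is_derive_sqr f x df : is_derive x 1 f df ->
  is_derive x 1 (fun u => f u ^+ 2) (2 * f x * df).
Proof.
move=> hf; have := is_deriveX 2 hf; rewrite expr1 /GRing.scale /=.
congr is_derive; apply/funext => u; rewrite !expr2.
Qed.

Lemma sub_le_of_derive_le f (df : R -> R) (a b K : R) : a <= b ->
  (forall t, a <= t <= b -> is_derive t 1 f (df t)) ->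
  (forall t, a <= t <= b -> df t <= K) -> f b - f a <= K * (b - a).
Proof.
move=> ab hd hK.
have cont : {within `[a, b], continuous f}.
  apply: derivable_within_continuous => t; rewrite in_itv /= => tab.
  exact: (@ex_derive _ _ _ _ _ _ _ (hd t tab)).
have [c] := MVT_segment ab (fun t tab => hd t (subset_itv_oo_cc tab)) cont.
rewrite in_itv /= => cab ->.
by apply: ler_wpM2r; [rewrite subr_ge0|exact: hK].
Qed.

Lemma cvg_sum_pred (T : Type) (F : set_system T) (FF : Filter F) (I : eqType)
    (r : seq I) (P : pred I) (h : I -> T -> R) (l : I -> R) :
  (forall i, P i -> h i @ F --> l i) ->
  (fun t => \sum_(i <- r | P i) h i t) @ F --> \sum_(i <- r | P i) l i.
Proof. by move=> hc; apply: cvg_big => //; exact: add_continuous. Qed.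

End Calculus.

Section Laplacian.
Variables (R : realType) (n : nat) (a : 'I_n -> 'I_n -> R).

Definition laplacian (x : 'I_n -> R) (i : 'I_n) : R :=
  \sum_j a i j * (x i - x j).

Hypothesis a_sym : forall i j, i != j -> a i j = a j i.

Lemma sum_antisym_swap (x w : 'I_n -> R) :
  \sum_i \sum_j a i j * (x i - x j) * w j =
  - \sum_i \sum_j a i j * (x i - x j) * w i.
Proof.
rewrite exchange_big /= -sumrN; apply: eq_bigr => i _.
rewrite -sumrN; apply: eq_bigr => j _.
have [->|ij] := eqVneq i j; first by rewrite !subrr !mulr0 mul0r oppr0.
by rewrite (a_sym ij); ring.
Qed.

Lemma dirichlet_formE (x w : 'I_n -> R) :
  \sum_i \sum_j a i j * ((x i - x j) * (w i - w j)) =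
  2 * \sum_i w i * laplacian x i.
Proof.
transitivity (\sum_i \sum_j a i j * (x i - x j) * w i -
              \sum_i \sum_j a i j * (x i - x j) * w j).
  by rewrite -sumrB; apply: eq_bigr => i _; rewrite -sumrB; apply: eq_bigr => j _; ring.
rewrite sum_antisym_swap opprK.
have -> : \sum_i \sum_j a i j * (x i - x j) * w i = \sum_i w i * laplacian x i.
  by apply: eq_bigr => i _; rewrite mulr_sumr; apply: eq_bigr => j _; ring.
ring.
Qed.

Lemma sum_laplacian (x : 'I_n -> R) : \sum_i laplacian x i = 0.
Proof.
have := dirichlet_formE x (fun _ => 1).
under [X in _ = 2 * X]eq_bigr => i _ do rewrite mul1r.
rewrite big1 => [|i _]; last by rewrite big1 // => j _; rewrite subrr !mulr0.
by move/esym/eqP; rewrite mulf_eq0 pnatr_eq0 => /eqP.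
Qed.

Lemma dirichlet_form_laplacian (c : R) (x : 'I_n -> R) :
  \sum_i \sum_j a i j *
    ((x i - x j) * (c * laplacian x i - c * laplacian x j)) =
  2 * c * \sum_i laplacian x i ^+ 2.
Proof.
rewrite (dirichlet_formE x (fun i => c * laplacian x i)) -mulrA !mulr_sumr.
by apply: eq_bigr => i _; rewrite expr2; ring.
Qed.

End Laplacian.

Lemma sum_sqdiff_laplacian (R : realType) (n : nat) (a : 'I_n -> 'I_n -> R)
    (a_sym : forall i j, i != j -> a i j = a j i) (c : R) (x : 'I_n -> R) :
  \sum_i \sum_j (x i - x j) * (c * laplacian a x i - c * laplacian a x j) =
  c * n%:R * \sum_i \sum_j a i j * (x i - x j) ^+ 2.
Proof.
have one_sym : forall i j : 'I_n, i != j -> (fun _ _ => 1 : R) i j = 1 by [].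
have := dirichlet_formE one_sym x (fun i => c * laplacian a x i).
under eq_bigr => i _ do under eq_bigr => j _ do rewrite mul1r.
move=> ->.
have lap1 i : laplacian (fun _ _ => 1) x i = n%:R * x i - \sum_j x j.
  rewrite /laplacian (eq_bigr (fun j => x i - x j)) => [|j _]; last by rewrite mul1r.
  by rewrite sumrB sumr_const card_ord mulr_natl.
under eq_bigr => i _ do rewrite lap1.
have -> : \sum_i \sum_j a i j * (x i - x j) ^+ 2 = 2 * \sum_i x i * laplacian a x i.
  rewrite -(dirichlet_formE a_sym); apply: eq_bigr => i _; apply: eq_bigr => j _.
  by rewrite expr2.
transitivity (\sum_i (2 * c * n%:R * (x i * laplacian a x i) -
                      2 * c * (\sum_j x j) * laplacian a x i)).
  by rewrite mulr_sumr; apply: eq_bigr => i _; ring.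
by rewrite sumrB -!mulr_sumr (sum_laplacian a_sym); ring.
Qed.

Section OffDiagonalSums.
Variables (R : realType) (n : nat) (f : 'I_n -> 'I_n -> R).

Lemma le_sum_offdiag a b : b != a -> (forall i j, j != i -> 0 <= f i j) ->
  f a b <= \sum_i \sum_(j < n | j != i) f i j.
Proof.
move=> ba f0; rewrite (bigD1 a) //= (bigD1 b) //= -addrA lerDl.
apply: addr_ge0; first by apply: sumr_ge0 => j /andP[ja _]; exact: f0.
by apply: sumr_ge0 => i _; apply: sumr_ge0 => j; exact: f0.
Qed.

Lemma sum_offdiagE : (forall i, f i i = 0) ->
  \sum_i \sum_(j < n | j != i) f i j = \sum_i \sum_j f i j.
Proof. by move=> f0; apply: eq_bigr => i _; rewrite [RHS](bigD1 i) //= f0 add0r. Qed.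

End OffDiagonalSums.

Section FlowAlgebra.
Variables (R : realType) (n s : nat) (beta L : R -> R) (p : 'I_n -> 'I_n -> R).
Implicit Types (y W : 'I_n -> 'I_s -> R) (i j : 'I_n).

Definition normalizer y : R := \sum_k \sum_(l < n | l != k) beta (dist2 y k l).

Definition flow_weight y i j : R := (p i j - qq beta y i j) * L (dist2 y i j).

(* [- \sum_(i != j) p_ij log q_ij], i.e. the relative entropy plus the constant
   entropy of [p]. *)
Definition cross_entropy y : R :=
  \sum_i \sum_(j < n | j != i) p i j * (ln (normalizer y) - ln (beta (dist2 y i j))).

Definition inv_prob_sum : R := \sum_i \sum_(j < n | j != i) (p i j)^-1.

Definition dist2_rate y W i j : R :=
  2 * \sum_k (y i k - y j k) * (W i k - W j k).

Definition dissipation y : R := \sum_i \sum_(j < n | j != i)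
  flow_weight y i j * dist2_rate y (flow_rhs beta p y) i j.

Lemma dist2_rate_diag y W i : dist2_rate y W i i = 0.
Proof. by rewrite /dist2_rate big1 ?mulr0 // => k _; rewrite subrr mul0r. Qed.

Lemma sum_weighted_dist2_rate (A : 'I_n -> 'I_n -> R) y W :
  \sum_i \sum_j A i j * dist2_rate y W i j =
  2 * \sum_k \sum_i \sum_j A i j * ((y i k - y j k) * (W i k - W j k)).
Proof.
transitivity (2 * \sum_i \sum_j \sum_k A i j * ((y i k - y j k) * (W i k - W j k))).
  rewrite mulr_sumr; apply: eq_bigr => i _; rewrite mulr_sumr; apply: eq_bigr => j _.
  by rewrite /dist2_rate mulrCA [in LHS]mulr_sumr.
by rewrite [in RHS]exchange_big; under [in RHS]eq_bigr => i _ do rewrite exchange_big.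
Qed.

Hypothesis n_gt1 : (1 < n)%N.
Hypothesis beta_gt0 : forall x : R, 0 <= x -> 0 < beta x.
Hypothesis beta_logderiv : forall x : R, 0 <= x -> is_derive x 1 beta (beta x * L x).
Hypothesis p_prob : prob_on_pairs p.

Lemma inv_prob_sum_ge0 : 0 <= inv_prob_sum.
Proof.
case: p_prob => p_gt0 _; apply: sumr_ge0 => i _; apply: sumr_ge0 => j ji.
by rewrite invr_ge0; apply/ltW/p_gt0; rewrite eq_sym.
Qed.

Lemma beta_le_normalizer y k l : l != k -> beta (dist2 y k l) <= normalizer y.
Proof.
move=> lk; rewrite /normalizer (bigD1 k) //= (bigD1 l) //= -addrA lerDl.
apply: addr_ge0; first by apply: sumr_ge0 => j _; apply/ltW/beta_gt0/dist2_ge0.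
by apply: sumr_ge0 => i _; apply: sumr_ge0 => j _; apply/ltW/beta_gt0/dist2_ge0.
Qed.

Lemma normalizer_gt0 y : 0 < normalizer y.
Proof.
have n0 : (0 < n)%N by lia.
have lk : Ordinal n_gt1 != Ordinal n0 by [].
exact: lt_le_trans (beta_gt0 (dist2_ge0 _ _ _)) (beta_le_normalizer y lk).
Qed.

Lemma sum_qq y : \sum_i \sum_(j < n | j != i) qq beta y i j = 1.
Proof.
under eq_bigr => i _ do rewrite -mulr_suml.
by rewrite -mulr_suml divff // gt_eqF // normalizer_gt0.
Qed.

Lemma flow_weightC y i j : i != j -> flow_weight y i j = flow_weight y j i.
Proof.
case: p_prob => _ [p_sym _] ij.
by rewrite /flow_weight /qq dist2C p_sym.
Qed.

Lemma derive1_ln_beta x : 0 <= x -> derive1 (fun u => ln (beta u)) x = L x.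
Proof.
move=> x0; have bx := beta_gt0 x0.
have h := is_derive1_comp (is_derive1_ln bx) (beta_logderiv x0).
by rewrite derive1E (@derive_val _ _ _ _ _ _ _ h) mulrA mulVf ?mul1r // gt_eqF.
Qed.

Lemma flow_rhsE y i k :
  flow_rhs beta p y i k = 4 * laplacian (flow_weight y) (fun j => y j k) i.
Proof.
rewrite /flow_rhs /laplacian; congr (_ * _).
rewrite [RHS](bigD1 i) //= subrr mulr0 add0r; apply: eq_bigr => j _.
by rewrite derive1_ln_beta ?dist2_ge0 /flow_weight; ring.
Qed.

Lemma ln_beta_le_of_cross_entropy_le y K : cross_entropy y <= K ->
  forall a b k l, b != a -> l != k ->
  ln (beta (dist2 y k l)) <= ln (beta (dist2 y a b)) + K * inv_prob_sum.
Proof.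
(* All terms [log Z - log beta_ij] of the cross entropy are nonnegative. *)
case: p_prob => p_gt0 _ hF a b k l ba lk.
have Z0 := normalizer_gt0 y.
pose c i j := ln (normalizer y) - ln (beta (dist2 y i j)).
have c0 i j : j != i -> 0 <= c i j.
  move=> ji; rewrite /c subr_ge0 ler_ln ?posrE ?beta_gt0 ?dist2_ge0 //.
  exact: beta_le_normalizer.
have pab : 0 < p a b by apply: p_gt0; rewrite eq_sym.
have Fab : p a b * c a b <= K.
  apply: le_trans hF; apply: (le_sum_offdiag (f := fun i j => p i j * c i j)) => //.
  by move=> i j ji; apply: mulr_ge0; [apply/ltW/p_gt0; rewrite eq_sym|exact: c0].
have cab : c a b <= K * inv_prob_sum.
  have K0 : 0 <= K by apply: le_trans Fab; apply: mulr_ge0; [exact: ltW|exact: c0].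
  apply: le_trans (_ : K / p a b <= _); first by rewrite ler_pdivlMr // mulrC.
  apply: ler_wpM2l => //; apply: (le_sum_offdiag (f := fun i j => (p i j)^-1)) => //.
  by move=> i j ji; rewrite invr_ge0; apply/ltW/p_gt0; rewrite eq_sym.
have : ln (beta (dist2 y k l)) <= ln (normalizer y).
  by rewrite ler_ln ?posrE ?beta_gt0 ?dist2_ge0 //; exact: beta_le_normalizer.
move: cab; rewrite /c; lra.
Qed.

Lemma dissipation_ge0 y : 0 <= dissipation y.
Proof.
rewrite /dissipation sum_offdiagE => [|i]; last by rewrite dist2_rate_diag mulr0.
rewrite sum_weighted_dist2_rate; apply: mulr_ge0 => //; apply: sumr_ge0 => k _.
under eq_bigr => i _ do under eq_bigr => j _ do rewrite !flow_rhsE.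
rewrite (dirichlet_form_laplacian (@flow_weightC y)).
by apply: mulr_ge0 => //; apply: sumr_ge0 => i _; exact: sqr_ge0.
Qed.

Lemma sum_dist2_rate_flow y :
  \sum_i \sum_j dist2_rate y (flow_rhs beta p y) i j =
  8 * n%:R * \sum_i \sum_j flow_weight y i j * dist2 y i j.
Proof.
transitivity (\sum_i \sum_j 1 * dist2_rate y (flow_rhs beta p y) i j).
  by under [RHS]eq_bigr => i _ do under eq_bigr => j _ do rewrite mul1r.
rewrite sum_weighted_dist2_rate.
under eq_bigr => k _ do under eq_bigr => i _ do under eq_bigr => j _
  do rewrite mul1r !flow_rhsE.
under eq_bigr => k _ do rewrite (sum_sqdiff_laplacian (@flow_weightC y)).
have -> : \sum_i \sum_j flow_weight y i j * dist2 y i j =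
    \sum_k \sum_i \sum_j flow_weight y i j * (y i k - y j k) ^+ 2.
  rewrite [RHS]exchange_big; apply: eq_bigr => i _.
  by rewrite [RHS]exchange_big; apply: eq_bigr => j _; rewrite mulr_sumr.
by rewrite -mulr_sumr; ring.
Qed.

(* The left side is the time derivative of the cross entropy when each
   [|y_i - y_j|^2] moves at rate [g i j]. *)
Lemma cross_entropy_rateE y (g : 'I_n -> 'I_n -> R) :
  \sum_i \sum_(j < n | j != i) p i j *
    ((\sum_k \sum_(l < n | l != k) beta (dist2 y k l) * L (dist2 y k l) * g k l)
       / normalizer y - L (dist2 y i j) * g i j) =
  - \sum_i \sum_(j < n | j != i) flow_weight y i j * g i j.
Proof.
case: p_prob => _ [_ p_sum1].
set D := (\sum_k _) / normalizer y.
transitivity (\sum_i \sum_(j < n | j != i) p i j * D -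
              \sum_i \sum_(j < n | j != i) p i j * (L (dist2 y i j) * g i j)).
  by rewrite -sumrB; apply: eq_bigr => i _; rewrite -sumrB; apply: eq_bigr => j _; ring.
under eq_bigr => i _ do rewrite -mulr_suml.
rewrite -mulr_suml p_sum1 mul1r.
have -> : D = \sum_i \sum_(j < n | j != i) qq beta y i j * (L (dist2 y i j) * g i j).
  rewrite /D mulr_suml; apply: eq_bigr => i _; rewrite mulr_suml.
  by apply: eq_bigr => j _; rewrite /qq -/(normalizer y); ring.
rewrite -sumrB -sumrN; apply: eq_bigr => i _; rewrite -sumrB -sumrN.
by apply: eq_bigr => j _; rewrite /flow_weight; ring.
Qed.

End FlowAlgebra.

Section Dynamics.
Variables (R : realType) (n s : nat) (beta L : R -> R) (p : 'I_n -> 'I_n -> R).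
Hypothesis n_gt1 : (1 < n)%N.
Hypothesis beta_gt0 : forall x : R, 0 <= x -> 0 < beta x.
Hypothesis beta_logderiv : forall x : R, 0 <= x -> is_derive x 1 beta (beta x * L x).
Hypothesis p_prob : prob_on_pairs p.
Variable Y : R -> 'I_n -> 'I_s -> R.
Hypothesis Y_ode : forall t : R, 0 < t -> forall i k,
  is_derive t 1 (fun u => Y u i k) (flow_rhs beta p (Y t) i k).

Implicit Types (t : R) (i j : 'I_n).

Let rate t := dist2_rate (Y t) (flow_rhs beta p (Y t)).

Lemma is_derive_dist2 t i j : 0 < t ->
  is_derive t 1 (fun u => dist2 (Y u) i j) (rate t i j).
Proof.
move=> t0; rewrite /rate /dist2_rate mulr_sumr.
apply: is_derive_sum_pred => k _.
apply: is_derive_eq (is_derive_sqr (is_deriveB (Y_ode t0 i k) (Y_ode t0 j k))) _.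
by rewrite !fctE; ring.
Qed.

Lemma is_derive_ln_beta_dist2 t i j : 0 < t ->
  is_derive t 1 (fun u => ln (beta (dist2 (Y u) i j))) (L (dist2 (Y t) i j) * rate t i j).
Proof.
move=> t0; have d0 := dist2_ge0 (Y t) i j.
have := is_derive1_comp (is_derive1_ln (beta_gt0 d0))
  (is_derive1_comp (beta_logderiv d0) (is_derive_dist2 i j t0)).
by move/is_derive_eq; apply; rewrite !mulrA mulVf ?mul1r // gt_eqF // beta_gt0.
Qed.

Lemma is_derive_cross_entropy t : 0 < t ->
  is_derive t 1 (fun u => cross_entropy beta p (Y u))
    (- dissipation beta L p (Y t)).
Proof.
move=> t0; rewrite /dissipation -cross_entropy_rateE //.
pose dZ := \sum_k \sum_(l < n | l != k)
  beta (dist2 (Y t) k l) * L (dist2 (Y t) k l) * rate t k l.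
have hZ : is_derive t 1 (fun u => normalizer beta (Y u)) dZ.
  apply: is_derive_sum_pred => k _; apply: is_derive_sum_pred => l _.
  exact: is_derive1_comp (beta_logderiv (dist2_ge0 _ _ _)) (is_derive_dist2 k l t0).
have hlnZ : is_derive t 1 (fun u => ln (normalizer beta (Y u))) (dZ / normalizer beta (Y t)).
  have := is_derive1_comp (is_derive1_ln (normalizer_gt0 n_gt1 beta_gt0 (Y t))) hZ.
  by move/is_derive_eq; apply; rewrite mulrC.
apply: is_derive_sum_pred => i _; apply: is_derive_sum_pred => j _.
have := is_deriveM (is_derive_cst (p i j) t 1)
  (is_deriveB hlnZ (is_derive_ln_beta_dist2 i j t0)).
by move/is_derive_eq; apply; rewrite /GRing.scale /= mulr0 addr0.
Qed.

Lemma is_derive_sqdist_sum t : 0 < t ->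
  is_derive t 1 (fun u => sqdist_sum (Y u))
    (8 * n%:R * \sum_i \sum_j flow_weight beta L p (Y t) i j * dist2 (Y t) i j).
Proof.
move=> t0; rewrite -sum_dist2_rate_flow //.
apply: is_derive_sum_pred => i _; apply: is_derive_sum_pred => j _.
exact: is_derive_dist2.
Qed.

End Dynamics.

Section CrossEntropyAlongFlow.
Variables (R : realType) (n s : nat) (beta L : R -> R) (p : 'I_n -> 'I_n -> R).
Hypothesis n_gt1 : (1 < n)%N.
Hypothesis beta_gt0 : forall x : R, 0 <= x -> 0 < beta x.
Hypothesis beta_logderiv : forall x : R, 0 <= x -> is_derive x 1 beta (beta x * L x).

Lemma cvg_dist2 (T : Type) (F : set_system T) (FF : Filter F)
    (Y : T -> 'I_n -> 'I_s -> R) (Y0 : 'I_n -> 'I_s -> R) :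
  (forall i k, (fun t => Y t i k) @ F --> Y0 i k) ->
  forall i j, (fun t => dist2 (Y t) i j) @ F --> dist2 Y0 i j.
Proof.
move=> Ycvg i j; apply: cvg_sum_pred => k _.
by rewrite expr2; under eq_cvg do rewrite expr2; apply: cvgM; exact: cvgB.
Qed.

Lemma cvg_cross_entropy (T : Type) (F : set_system T) (FF : Filter F)
    (Y : T -> 'I_n -> 'I_s -> R) (Y0 : 'I_n -> 'I_s -> R) :
  (forall i k, (fun t => Y t i k) @ F --> Y0 i k) ->
  (fun t => cross_entropy beta p (Y t)) @ F --> cross_entropy beta p Y0.
Proof.
move=> Ycvg; have d2cvg := cvg_dist2 FF Ycvg.
have beta_d2cvg i j : (fun t => beta (dist2 (Y t) i j)) @ F --> beta (dist2 Y0 i j).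
  apply: continuous_cvg (d2cvg i j); apply: differentiable_continuous.
  apply/derivable1_diffP; exact: (@ex_derive _ _ _ _ _ _ _ (beta_logderiv (dist2_ge0 _ _ _))).
apply: cvg_sum_pred => i _; apply: cvg_sum_pred => j _.
apply: cvgM; first exact: cvg_cst.
apply: cvgB; apply: continuous_cvg.
- exact: continuous_ln (normalizer_gt0 n_gt1 beta_gt0 _).
- by apply: cvg_sum_pred => k _; apply: cvg_sum_pred => l _.
- exact: continuous_ln (beta_gt0 (dist2_ge0 _ _ _)).
- exact: beta_d2cvg.
Qed.

Hypothesis p_prob : prob_on_pairs p.
Variables (Y0 : 'I_n -> 'I_s -> R) (Y : R -> 'I_n -> 'I_s -> R).
Hypothesis Y_sol : is_flow_solution beta p Y0 Y.

Lemma cross_entropy_nonincreasing (a b : R) : 0 < a -> a <= b ->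
  cross_entropy beta p (Y b) <= cross_entropy beta p (Y a).
Proof.
case: Y_sol => _ [_ Y_ode] a0 ab.
rewrite -subr_le0 -(mul0r (b - a)).
apply: (sub_le_of_derive_le (f := fun u => cross_entropy beta p (Y u))
  (df := fun u => - dissipation beta L p (Y u))) ab _ _ => t /andP[ta _].
  exact (is_derive_cross_entropy n_gt1 beta_gt0 beta_logderiv p_prob Y_ode (lt_le_trans a0 ta)).
by rewrite oppr_le0; exact: dissipation_ge0.
Qed.

Lemma cross_entropy_le_initial (t : R) : 0 <= t ->
  cross_entropy beta p (Y t) <= cross_entropy beta p Y0.
Proof.
case: (Y_sol) => Y_init [Y_cont _]; rewrite le_eqVlt => /predU1P[<-|t0].
  suff -> : Y 0 = Y0 by [].
  by apply/funext => i; apply/funext => k; exact: Y_init.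
have cvgF := cvg_cross_entropy (at_right_proper_filter 0) Y_cont.
rewrite -(cvg_lim _ cvgF) //; apply: limr_ge; first exact: cvgP cvgF.
near=> u; apply: cross_entropy_nonincreasing.
  by near: u; exact: nbhs_right_gt.
by near: u; exact: nbhs_right_le.
Unshelve. all: by end_near.
Qed.

End CrossEntropyAlongFlow.

Section Kernels.
Variable R : realType.
Implicit Type x : R.

Lemma beta_g_gt0 x : 0 < beta_g x.
Proof. exact: expR_gt0. Qed.

Lemma is_derive_beta_g x : is_derive x 1 (@beta_g R) (beta_g x * -1).
Proof. exact: is_derive1_comp (is_derive_expR _) (is_deriveNid _ _). Qed.

Lemma beta_t_gt0 x : 0 <= x -> 0 < beta_t x.
Proof. by move=> x0; rewrite /beta_t invr_gt0; lra. Qed.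

Lemma is_derive_beta_t x : 0 <= x ->
  is_derive x 1 (@beta_t R) (beta_t x * - beta_t x).
Proof.
move=> x0; have x1 : 1 + x != 0 by rewrite gt_eqF // ltr_wpDr.
have := is_deriveV x1 (is_deriveD (is_derive_cst (1 : R) x 1) (is_derive_id x 1)).
by move/is_derive_eq; apply; rewrite /beta_t /GRing.scale /= add0r mulr1 mulrN expr2 invfM.
Qed.

End Kernels.

Lemma diam_bounded_gaussian (R : realType) (n s : nat) (p : 'I_n -> 'I_n -> R)
    (Y0 : 'I_n -> 'I_s -> R) (Y : R -> 'I_n -> 'I_s -> R) :
  (s.+1 < n)%N -> prob_on_pairs p -> is_flow_solution (@beta_g R) p Y0 Y ->
  exists C : R, forall t : R, 0 <= t -> diam (Y t) <= C.
Proof.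
move=> sn p_prob Y_sol.
have n_gt1 : (1 < n)%N by lia.
have beta_gt0 (x : R) : 0 <= x -> 0 < beta_g x by move=> _; exact: beta_g_gt0.
have beta_logderiv (x : R) : 0 <= x ->
    is_derive x 1 (@beta_g R) (beta_g x * (fun _ => -1) x).
  by move=> _; exact: is_derive_beta_g.
pose M := `|cross_entropy (@beta_g R) p Y0| * inv_prob_sum p.
have M0 : 0 <= M by rewrite mulr_ge0 ?normr_ge0 ?inv_prob_sum_ge0.
have M40 : 0 <= 4 * M * s.+1%:R + M.
  by apply: addr_ge0 => //; apply: mulr_ge0 => //; apply: mulr_ge0.
exists (Num.sqrt (4 * M * s.+1%:R + M)) => t t0.
apply: diam_le_sqrt => //; apply: dist2_le_of_almost_equidistant => // a b k l ab kl.
have F_le : cross_entropy (@beta_g R) p (Y t) <= `|cross_entropy (@beta_g R) p Y0|.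
  exact: le_trans (cross_entropy_le_initial n_gt1 beta_gt0 beta_logderiv p_prob Y_sol t0)
                  (ler_norm _).
rewrite eq_sym in ab; rewrite eq_sym in kl.
have := ln_beta_le_of_cross_entropy_le n_gt1 beta_gt0 p_prob F_le ab kl.
by rewrite /beta_g !expRK -/M; lra.
Qed.

Lemma le_mul_powR_quarter (R : realType) (d A t : R) : 0 <= d -> 0 <= A -> 0 <= t ->
  d ^+ 4 <= A * t -> d <= (1 + A) * t `^ 4^-1.
Proof.
move=> d0 A0 t0 hd.
have r0 : 0 <= t `^ 4^-1 := powR_ge0 _ _.
have r4 : (t `^ 4^-1) ^+ 4 = t.
  by rewrite -powR_mulrn // -powRrM mulVf ?powRr1.
rewrite -(ler_pXn2r (_ : (0 < 4)%N)) ?nnegrE ?mulr_ge0 //; last lra.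
rewrite exprMn r4; apply: le_trans hd _; apply: ler_wpM2r => //.
have C1 : 1 <= 1 + A by lra.
have : 1 <= (1 + A) ^+ 3 by rewrite exprn_ege1.
rewrite exprS; nra.
Qed.

Section StudentKernel.
Variables (R : realType) (n s : nat) (p : 'I_n -> 'I_n -> R).
Hypothesis n_gt1 : (1 < n)%N.
Hypothesis p_prob : prob_on_pairs p.
Implicit Type y : 'I_n -> 'I_s -> R.

(* the logarithmic derivative of [beta_t] *)
Let L (x : R) : R := - beta_t x.

Lemma flow_moment_le y :
  \sum_i \sum_j flow_weight (@beta_t R) L p y i j * dist2 y i j <=
  \sum_i \sum_(j < n | j != i) p i j * beta_t (dist2 y i j).
Proof.
case: p_prob => _ [_ p_sum1].
have q_sum1 := sum_qq n_gt1 (@beta_t_gt0 R) y.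
rewrite -sum_offdiagE => [|i]; last by rewrite dist2xx mulr0.
(* [beta_t d * d = 1 - beta_t d] turns each moment term into a difference of weights. *)
have term i j : flow_weight (@beta_t R) L p y i j * dist2 y i j =
    p i j * beta_t (dist2 y i j) - p i j -
    (qq (@beta_t R) y i j * beta_t (dist2 y i j) - qq (@beta_t R) y i j).
  have d1 : 1 + dist2 y i j != 0 by rewrite gt_eqF // ltr_pwDl ?dist2_ge0.
  by rewrite /flow_weight /L /beta_t; field.
under eq_bigr => i _ do under eq_bigr => j _ do rewrite term.
under eq_bigr => i _ do rewrite !sumrB.
rewrite !sumrB p_sum1 q_sum1.
have : 0 <= \sum_i \sum_(j < n | j != i) qq (@beta_t R) y i j * beta_t (dist2 y i j).
  apply: sumr_ge0 => i _; apply: sumr_ge0 => j _; apply: mulr_ge0.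
    by apply: divr_ge0; apply/ltW; [exact: beta_t_gt0 (dist2_ge0 _ _ _)|
                                    exact: normalizer_gt0 n_gt1 (@beta_t_gt0 R) y].
  exact/ltW/beta_t_gt0/dist2_ge0.
lra.
Qed.

Definition pairs_comparable y (E : R) : Prop :=
  forall a b k l, b != a -> l != k -> 1 + dist2 y a b <= (1 + dist2 y k l) * E.

Lemma beta_t_mul_sqdist_sum_le y E i j : 0 < E -> pairs_comparable y E ->
  j != i -> beta_t (dist2 y i j) * sqdist_sum y <= n%:R ^+ 2 * E.
Proof.
move=> E0 cmp ji; have d0 := dist2_ge0 y.
have -> : n%:R ^+ 2 * E = \sum_(a < n) \sum_(b < n) E.
  by rewrite !sumr_const card_ord -mulrnA -[RHS]mulr_natl natrM expr2.
rewrite /sqdist_sum mulr_sumr; apply: ler_sum => a _.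
rewrite mulr_sumr; apply: ler_sum => b _.
have [->|ba] := eqVneq b a; first by rewrite dist2xx mulr0 ltW.
have dab : dist2 y a b <= (1 + dist2 y i j) * E by have := cmp a b i j ba ji; lra.
apply: le_trans (ler_wpM2l (ltW (beta_t_gt0 (d0 i j))) dab) _.
by rewrite mulrA /beta_t mulVf ?mul1r // gt_eqF // ltr_pwDl ?d0 ?ltr01.
Qed.

Lemma sqdist_sum_mul_moment_le y E : 0 < E -> pairs_comparable y E ->
  sqdist_sum y * (\sum_i \sum_j flow_weight (@beta_t R) L p y i j * dist2 y i j)
    <= n%:R ^+ 2 * E.
Proof.
case: (p_prob) => p_gt0 [_ p_sum1] E0 cmp.
apply: le_trans (ler_wpM2l (sqdist_sum_ge0 y) (flow_moment_le y)) _.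
have -> : n%:R ^+ 2 * E = \sum_i \sum_(j < n | j != i) p i j * (n%:R ^+ 2 * E).
  by under eq_bigr => i _ do rewrite -mulr_suml; rewrite -mulr_suml p_sum1 mul1r.
rewrite mulr_sumr; apply: ler_sum => i _.
rewrite mulr_sumr; apply: ler_sum => j ji.
rewrite mulrCA; apply: ler_wpM2l; first by apply/ltW/p_gt0; rewrite eq_sym.
by rewrite mulrC; exact: beta_t_mul_sqdist_sum_le.
Qed.

Variables (Y0 : 'I_n -> 'I_s -> R) (Y : R -> 'I_n -> 'I_s -> R).
Hypothesis Y_sol : is_flow_solution (@beta_t R) p Y0 Y.

Let beta_logderiv (x : R) : 0 <= x -> is_derive x 1 (@beta_t R) (beta_t x * L x).
Proof. exact: is_derive_beta_t. Qed.

Lemma pairs_comparable_flow :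
  exists2 E : R, 0 < E & forall u, 1 <= u -> pairs_comparable (Y u) E.
Proof.
pose M := `|cross_entropy (@beta_t R) p (Y 1)| * inv_prob_sum p.
exists (expR M); first exact: expR_gt0.
move=> u u1 a b k l ba lk.
have F_le : cross_entropy (@beta_t R) p (Y u) <= `|cross_entropy (@beta_t R) p (Y 1)|.
  apply: le_trans (ler_norm _).
  exact (cross_entropy_nonincreasing n_gt1 (@beta_t_gt0 R) beta_logderiv p_prob Y_sol ltr01 u1).
have := ln_beta_le_of_cross_entropy_le n_gt1 (@beta_t_gt0 R) p_prob F_le ba lk.
have pab : 0 < 1 + dist2 (Y u) a b by rewrite ltr_pwDl ?dist2_ge0.
have pkl : 0 < 1 + dist2 (Y u) k l by rewrite ltr_pwDl ?dist2_ge0.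
rewrite /beta_t !lnV ?posrE // -/M => h.
have : ln (1 + dist2 (Y u) a b) <= ln (1 + dist2 (Y u) k l) + M by lra.
by rewrite -ler_expR expRD !lnK ?posrE.
Qed.

Lemma sqdist_sum_sq_growth : exists K : R, forall t, 1 <= t ->
  sqdist_sum (Y t) ^+ 2 - sqdist_sum (Y 1) ^+ 2 <= K * (t - 1).
Proof.
have [E E0 cmp] := pairs_comparable_flow.
case: Y_sol => _ [_ Y_ode].
exists (16 * n%:R * (n%:R ^+ 2 * E)) => t t1.
apply: (@sub_le_of_derive_le R (fun u => sqdist_sum (Y u) ^+ 2)
  (fun u => 2 * sqdist_sum (Y u) *
     (8 * n%:R * \sum_i \sum_j flow_weight (@beta_t R) L p (Y u) i j * dist2 (Y u) i j))
  1 t _ t1) => u /andP[u1 _].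
  apply: is_derive_sqr.
  exact (is_derive_sqdist_sum (@beta_t_gt0 R) beta_logderiv p_prob Y_ode (lt_le_trans ltr01 u1)).
rewrite [X in X <= _](_ : _ = 16 * n%:R * (sqdist_sum (Y u) *
  \sum_i \sum_j flow_weight (@beta_t R) L p (Y u) i j * dist2 (Y u) i j)); last by ring.
by apply: ler_wpM2l; [rewrite mulr_ge0|exact: sqdist_sum_mul_moment_le (cmp u u1)].
Qed.

End StudentKernel.

Lemma diam_growth_student (R : realType) (n s : nat) (p : 'I_n -> 'I_n -> R)
    (Y0 : 'I_n -> 'I_s -> R) (Y : R -> 'I_n -> 'I_s -> R) :
  (1 < n)%N -> prob_on_pairs p -> is_flow_solution (@beta_t R) p Y0 Y ->
  exists C : R, forall t : R, 1 <= t -> diam (Y t) <= C * t `^ (4^-1).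
Proof.
move=> n_gt1 p_prob Y_sol.
have [K growth] := sqdist_sum_sq_growth n_gt1 p_prob Y_sol.
pose A := sqdist_sum (Y 1) ^+ 2 + `|K|.
exists (1 + A) => t t1.
have t0 : 0 <= t by lra.
apply: le_mul_powR_quarter => //; first exact: diam_ge0.
  by rewrite addr_ge0 ?sqr_ge0.
apply: le_trans (diam_exp4_le _) _.
have := growth t t1.
have : K * (t - 1) <= `|K| * t.
  apply: le_trans (_ : `|K| * (t - 1) <= _); first by rewrite ler_wpM2r ?subr_ge0 ?ler_norm.
  by rewrite ler_wpM2l // lerBlDr lerDl.
have : sqdist_sum (Y 1) ^+ 2 <= sqdist_sum (Y 1) ^+ 2 * t by rewrite ler_peMr ?sqr_ge0.
rewrite /A mulrDl; lra.
Qed.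

Theorem theorem1p1 (R : realType) (n s : nat) (p : 'I_n -> 'I_n -> R)
  (Y0 : 'I_n -> 'I_s -> R) :
  (1 <= s)%N -> (s.+1 < n)%N -> prob_on_pairs p ->
  (forall Y : R -> 'I_n -> 'I_s -> R,
     is_flow_solution (@beta_t R) p Y0 Y ->
     exists C : R, forall t : R, 1 <= t -> diam (Y t) <= C * t `^ (4^-1)) /\
  (forall Y : R -> 'I_n -> 'I_s -> R,
     is_flow_solution (@beta_g R) p Y0 Y ->
     exists C : R, forall t : R, 0 <= t -> diam (Y t) <= C).
Proof.
move=> _ sn p_prob; have n_gt1 : (1 < n)%N by lia.
split => Y Y_sol.
- exact: diam_growth_student n_gt1 p_prob Y_sol.
- exact: diam_bounded_gaussian sn p_prob Y_sol.
Qed.
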